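(* Let $A\subset\mathbb R$ be an open interval of length $R>2$ and let $\psi:A\to\mathbb C$ be a regular $\mathbb C$-supershift on $A$. Let $0<\delta<R-2$, let $\theta$ be a smooth function on $\mathbb R$ with support in $[0,\delta]$, and let $A_\delta=\{a\in A:\ a-\delta\in A\}$. Then the function $$(\psi*\theta)(a)=\int_0^\delta\theta(\alpha)\,\psi(a-\alpha)\,d\alpha,\qquad a\in A_\delta,$$ is smooth and is a regular $\mathbb C$-supershift on $A_\delta$.
   Context: For an open interval $A\subset\mathbb R$ of length $R>2$ (possibly infinite), set $\mathbb A=\{(a,a')\in\mathbb R\times A:\ a'+[-1,1]\subset A,\ a+a'\in A\}$. For a sequence $\boldsymbol\epsilon=(\epsilon_N)_{N\ge1}$ with $\epsilon_N\in[0,1)$ and $\epsilon_N\to0$, put $h^{\boldsymbol\epsilon}_{N,\nu}=1-2\,\frac{\nu+\epsilon_N(N-\nu)}{N}$ for $0\le\nu\le N$. For a continuous $\psi:A\to\mathbb C$ and $(a,a')\in\mathbb A$ set $$S_N^{\boldsymbol\epsilon}[\psi](a,a')=\sum_{\nu=0}^N\binom N\nu\Big(\frac{1+a}2\Big)^{N-\nu}\Big(\frac{1-a}2\Big)^{\nu}\psi\big(a'+h^{\boldsymbol\epsilon}_{N,\nu}\big).$$ A continuous $\psi:A\to\mathbb C$ is called a regular $\mathbb C$-supershift on $A$ if (1) for every such sequence $\boldsymbol\epsilon$, $S_N^{\boldsymbol\epsilon}[\psi](a,a')\to\psi(a+a')$ as $N\to\infty$ uniformly on compact subsets of $\mathbb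 A$; and (2) for every family $\{\boldsymbol\epsilon_{\iota'}=(\epsilon_{\iota',N})_{N\ge1}:\iota'\in I'\}$ of such sequences with $\sup_{\iota'\in I'}\epsilon_{\iota',N}\to0$ as $N\to\infty$, the convergence in (1) is uniform with respect to $\iota'\in I'$ on each compact subset of $\mathbb A$. *)

From Stdlib Require Import Reals List.
From Coquelicot Require Import Coquelicot.
Open Scope R_scope.

Definition in_interval (lo hi : Rbar) (x : R) : Prop :=
  Rbar_lt lo x /\ Rbar_lt x hi.

Definition AA (A : R -> Prop) (p : R * R) : Prop :=
  (forall t, -1 <= t <= 1 -> A (snd p + t)) /\ A (snd p) /\ A (fst p + snd p).

Definition compact_RR (K : R * R -> Prop) : Prop :=
  forall (I : Type) (U : I -> R * R -> Prop),
    (forall i, open (U i)) ->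
    (forall p, K p -> exists i, U i p) ->
    exists l : list I, forall p, K p -> exists i, In i l /\ U i p.

Definition adm_seq (eps : nat -> R) : Prop :=
  (forall N, (1 <= N)%nat -> 0 <= eps N < 1) /\ is_lim_seq eps 0.

Definition h_eps (eps : nat -> R) (N nu : nat) : R :=
  1 - 2 * ((INR nu + eps N * (INR N - INR nu)) / INR N).

Definition S_eps (eps : nat -> R) (psi : R -> C) (N : nat) (a a' : R) : C :=
  sum_n (fun nu : nat =>
    Cmult (RtoC (Binomial.C N nu * ((1 + a) / 2) ^ (N - nu) * ((1 - a) / 2) ^ nu))
          (psi (a' + h_eps eps N nu))) N.

Definition regular_supershift (A : R -> Prop) (psi : R -> C) : Prop :=
  (forall x, A x -> continuous psi x) /\
  (forall eps, adm_seq eps ->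
    forall K, compact_RR K -> (forall p, K p -> AA A p) ->
    forall e, 0 < e -> exists N0 : nat, forall N, (N0 <= N)%nat ->
      forall p, K p -> Cmod (Cminus (S_eps eps psi N (fst p) (snd p)) (psi (fst p + snd p))) < e) /\
  (forall (I' : Type) (epsf : I' -> nat -> R),
    (forall i, adm_seq (epsf i)) ->
    (forall eta, 0 < eta -> exists N1 : nat, forall N, (N1 <= N)%nat ->
        forall i, epsf i N <= eta) ->
    forall K, compact_RR K -> (forall p, K p -> AA A p) ->
    forall e, 0 < e -> exists N0 : nat, forall N, (N0 <= N)%nat ->
      forall i p, K p ->
        Cmod (Cminus (S_eps (epsf i) psi N (fst p) (snd p)) (psi (fst p + snd p))) < e).

Definition smooth_R_on (D : R -> Prop) (f : R -> R) : Prop :=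
  exists F : nat -> R -> R, (forall x, F O x = f x) /\
    forall n x, D x -> is_derive (F n) x (F (S n) x).

Definition smooth_C_on (D : R -> Prop) (f : R -> C) : Prop :=
  exists F : nat -> R -> C, (forall x, F O x = f x) /\
    forall n x, D x -> @is_derive R_AbsRing C_R_NormedModule (F n) x (F (S n) x).

Definition conv_delta (psi : R -> C) (theta : R -> R) (delta : R) (a : R) : C :=
  @RInt C_R_CompleteNormedModule
    (fun alpha => Cmult (RtoC (theta alpha)) (psi (a - alpha))) 0 delta.

From Stdlib Require Import Reals List Lra Lia Classical FunctionalExtensionality ClassicalEpsilon.
From Coquelicot Require Import Coquelicot.
Open Scope R_scope.

(* Substituting b = a - alpha writes (psi * theta)(a) as the integral of
   theta(a - b) psi(b) over any window [c, d] containing [a - delta, a], which moves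
   the dependence on a into the smooth factor; differentiating under the integral
   gives (psi * theta)' = psi * theta', and iterating gives smoothness.
   Since S_N is linear and acts on the second variable by translation,
   S_N[psi * theta](a, a') is the integral of theta(alpha) S_N[psi](a, a' - alpha),
   so the uniform convergence of S_N[psi] on the compact set
   { (a, a' - alpha) : (a, a') in K, 0 <= alpha <= delta } transfers to psi * theta,
   at the cost of a factor delta * sup |theta|. *)

Local Notation scalC := (@scal R_Ring C_R_ModuleSpace).
Local Notation normC := (@norm R_AbsRing C_R_NormedModule).

Lemma in_interval_between lo hi x y z :
  in_interval lo hi x -> in_interval lo hi y -> x <= z <= y -> in_interval lo hi z.
Proof.
  unfold in_interval; intros [Hlx Hxh] [Hly Hyh] Hz.
  destruct lo as [l| |], hi as [h| |]; simpl in *; split; try tauto; lra.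
Qed.

Lemma in_interval_open lo hi x : in_interval lo hi x ->
  exists r, 0 < r /\ forall y, Rabs (y - x) < r -> in_interval lo hi y.
Proof.
  intros [Hl Hh].
  destruct lo as [l| |], hi as [h| |]; simpl in Hl, Hh; try contradiction.
  - exists (Rmin (x - l) (h - x)); split; [apply Rmin_pos; lra|].
    intros y Hy%Rabs_def2; pose proof (Rmin_l (x - l) (h - x)); pose proof (Rmin_r (x - l) (h - x)).
    split; simpl; lra.
  - exists (x - l); split; [lra|]; intros y Hy%Rabs_def2; split; simpl; [lra|exact I].
  - exists (h - x); split; [lra|]; intros y Hy%Rabs_def2; split; simpl; [exact I|lra].
  - exists 1; split; [lra|]; intros y _; split; exact I.
Qed.

Lemma Cmult_RtoC_scal (r : R) (z : C) : Cmult (RtoC r) z = scalC r z.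
Proof. destruct z; compute; f_equal; ring. Qed.

Lemma scalC_Cmult_RtoC (t w : R) (z : C) : scalC t (Cmult (RtoC w) z) = Cmult (RtoC w) (scalC t z).
Proof. destruct z; compute; f_equal; ring. Qed.

Lemma continuous_of_is_derive (f f' : R -> R) :
  (forall x, is_derive f x (f' x)) -> forall x, continuous f x.
Proof.
  intros Hf x; apply (ex_derive_continuous (K := R_AbsRing) (V := R_NormedModule)).
  eexists; apply Hf.
Qed.

Lemma is_derive_vanish_outside (f f' : R -> R) (a b : R) :
  (forall x, is_derive f x (f' x)) -> (forall x, (x < a \/ b < x) -> f x = 0) ->
  forall x, (x < a \/ b < x) -> f' x = 0.
Proof.
  intros Hf Hz x Hx.
  assert (Hloc : locally x (fun t => 0 = f t)).
  { destruct Hx as [Hx|Hx].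
    - assert (Hr : 0 < a - x) by lra; exists (mkposreal _ Hr); intros t Ht.
      change (Rabs (t - x) < a - x) in Ht; apply Rabs_def2 in Ht.
      symmetry; apply Hz; left; lra.
    - assert (Hr : 0 < x - b) by lra; exists (mkposreal _ Hr); intros t Ht.
      change (Rabs (t - x) < x - b) in Ht; apply Rabs_def2 in Ht.
      symmetry; apply Hz; right; lra. }
  rewrite <- (is_derive_unique f x _ (Hf x)).
  apply is_derive_unique, (is_derive_ext_loc (fun _ => 0) f x _ Hloc).
  apply (is_derive_const (K := R_AbsRing) (V := R_NormedModule)).
Qed.

Lemma derivs_vanish_outside (F : nat -> R -> R) (a b : R) :
  (forall n x, is_derive (F n) x (F (S n) x)) -> (forall x, (x < a \/ b < x) -> F O x = 0) ->
  forall n x, (x < a \/ b < x) -> F n x = 0.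
Proof.
  intros HF H0 n; induction n as [|n IH]; [exact H0|].
  exact (is_derive_vanish_outside (F n) (F (S n)) a b (HF n) IH).
Qed.

Lemma bounded_of_vanish_outside (f : R -> R) (a b : R) :
  a <= b -> (forall x, continuous f x) -> (forall x, (x < a \/ b < x) -> f x = 0) ->
  exists M, forall x, Rabs (f x) <= M.
Proof.
  intros Hab Hf Hz.
  assert (Hc : forall c, a <= c <= b -> continuity_pt (fun x => Rabs (f x)) c).
  { intros c _; apply (continuity_pt_comp f Rabs);
      [apply continuity_pt_filterlim, Hf | apply Rcontinuity_abs]. }
  destruct (continuity_ab_maj _ a b Hab Hc) as [xM [HM _]].
  exists (Rabs (f xM)); intro x.
  destruct (Rlt_or_le x a) as [Hx|Hx]; [|destruct (Rlt_or_le b x) as [Hx'|Hx']].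
  1, 2: rewrite Hz, Rabs_R0 by tauto; apply Rabs_pos.
  apply HM; lra.
Qed.

Lemma continuous_bounded_segment (f : R -> C) c d : c <= d ->
  (forall b, c <= b <= d -> continuous f b) ->
  exists M, forall b, c <= b <= d -> normC (f b) <= M.
Proof.
  intros Hcd Hf.
  assert (Hc : forall b, c <= b <= d -> continuity_pt (fun b => normC (f b)) b).
  { intros b Hb; apply continuity_pt_filterlim.
    apply (filterlim_comp _ _ _ f normC _ (locally (f b))); [now apply Hf|].
    intros P HP.
    destruct (filterlim_norm (K := R_AbsRing) (V := C_R_NormedModule) (f b) P HP) as [e He].
    exists e; exact He. }
  destruct (continuity_ab_maj _ c d Hcd Hc) as [bM [HM _]].
  exists (normC (f bM)); exact HM.
Qed.

Lemma taylor_remainder_le (g g' g'' : R -> R) (M2 : R) :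
  (forall x, is_derive g x (g' x)) -> (forall x, is_derive g' x (g'' x)) ->
  (forall x, Rabs (g'' x) <= M2) ->
  forall x y, Rabs (g y - g x - (y - x) * g' x) <= M2 * (y - x) ^ 2.
Proof.
  intros H1 H2 HM x y.
  assert (Hk : forall t, Rabs (t - x) <= Rabs (y - x) ->
    is_derive (fun t => g t - t * g' x) t (g' t - g' x)).
  { intros t _; auto_derive; [exists (g' t); apply H1|].
    replace (Derive (fun s => g s) t) with (g' t) by (symmetry; apply is_derive_unique, H1); ring. }
  destruct (MVT_cor4 _ _ x (Rabs (y - x)) Hk y (Rle_refl _)) as [c [Ec Hc]].
  destruct (MVT_cor4 g' g'' x (Rabs (c - x)) (fun t _ => H2 t) c (Rle_refl _)) as [c' [Ec' _]].
  replace (g y - g x - (y - x) * g' x) with ((g y - y * g' x) - (g x - x * g' x)) by ring.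
  rewrite Ec, Ec', !Rabs_mult, <- pow2_abs.
  pose proof (Rabs_pos (c - x)); pose proof (Rabs_pos (y - x)); pose proof (Rabs_pos (g'' c')).
  apply Rle_trans with (M2 * Rabs (c - x) * Rabs (y - x)).
  - apply Rmult_le_compat_r; [lra|]; apply Rmult_le_compat_r; [lra | apply HM].
  - rewrite Rmult_assoc; apply Rmult_le_compat_l; [pose proof (HM c'); lra | nra].
Qed.

Lemma is_derive_of_quadratic_remainder {V : NormedModule R_AbsRing} (f : R -> V) x l (K : R) :
  (forall y, norm (minus (minus (f y) (f x)) (scal (y - x) l)) <= K * (y - x) ^ 2) ->
  is_derive f x l.
Proof.
  intros Hrem; split; [apply is_linear_scal_l|].
  intros x' Hx'.
  apply (is_filter_lim_locally_unique (K := R_AbsRing) (V := AbsRing_NormedModule R_AbsRing)) in Hx'.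
  subst x'; intros eps.
  assert (HK1 : 0 < Rabs K + 1) by (pose proof (Rabs_pos K); lra).
  assert (HK : 0 < eps / (Rabs K + 1)) by (apply Rdiv_lt_0_compat; [apply cond_pos | exact HK1]).
  exists (mkposreal _ HK); intros y Hy; change (Rabs (y - x) < eps / (Rabs K + 1)) in Hy.
  change (norm (minus y x)) with (Rabs (y - x)).
  eapply Rle_trans; [apply Hrem|].
  assert (Hu : Rabs (y - x) * (Rabs K + 1) < eps).
  { apply (Rmult_lt_compat_r (Rabs K + 1)) in Hy; [|exact HK1].
    unfold Rdiv in Hy; rewrite Rmult_assoc, Rinv_l in Hy by lra; lra. }
  rewrite <- pow2_abs; pose proof (Rabs_pos (y - x)); pose proof (Rle_abs K); nra.
Qed.

(** * Convolution and differentiation under the integral sign *)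

Lemma continuous_conv_integrand (psi : R -> C) (g : R -> R) a al :
  continuous g al -> continuous psi (a - al) ->
  continuous (fun al => scalC (g al) (psi (a - al))) al.
Proof.
  intros Hg Hp; apply (continuous_scal (K := R_AbsRing) (V := C_R_NormedModule)); [exact Hg|].
  apply (continuous_comp (fun al => a - al) psi); [|exact Hp].
  apply (continuous_minus (V := R_NormedModule)); [apply continuous_const | apply continuous_id].
Qed.

Lemma is_RInt_conv_delta (psi : R -> C) (g : R -> R) delta a : 0 <= delta ->
  (forall x, continuous g x) -> (forall b, a - delta <= b <= a -> continuous psi b) ->
  @is_RInt C_R_NormedModule (fun al => scalC (g al) (psi (a - al))) 0 delta
    (conv_delta psi g delta a).
Proof.
  intros Hd Hg Hp.
  assert (Hex : @ex_RInt C_R_CompleteNormedModule (fun al => scalC (g al) (psi (a - al))) 0 delta).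
  { apply ex_RInt_continuous; intros z; rewrite Rmin_left, Rmax_right by lra; intros Hz.
    apply continuous_conv_integrand; [apply Hg | apply Hp; lra]. }
  unfold conv_delta; erewrite RInt_ext by (intros; apply Cmult_RtoC_scal).
  exact (RInt_correct (V := C_R_CompleteNormedModule) _ _ _ Hex).
Qed.

Lemma is_RInt_conv_delta_reflect (psi : R -> C) (g : R -> R) delta a : 0 <= delta ->
  (forall x, continuous g x) -> (forall b, a - delta <= b <= a -> continuous psi b) ->
  @is_RInt C_R_NormedModule (fun b => scalC (g (a - b)) (psi b)) (a - delta) a
    (conv_delta psi g delta a).
Proof.
  intros Hd Hg Hp.
  assert (Hconv := is_RInt_conv_delta psi g delta a Hd Hg Hp).
  apply (is_RInt_swap (V := C_R_NormedModule)) in Hconv.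
  replace delta with (-1 * (a - delta) + a) in Hconv at 1 by ring.
  replace 0 with (-1 * a + a) in Hconv at 1 by ring.
  apply is_RInt_comp_lin, is_RInt_opp in Hconv; rewrite opp_opp in Hconv.
  eapply is_RInt_ext, Hconv; intros b _; cbv beta.
  replace (a - (-1 * b + a)) with b by ring; replace (-1 * b + a) with (a - b) by ring.
  destruct (psi b); compute; f_equal; ring.
Qed.

Lemma continuous_window_integrand (psi : R -> C) (g : R -> R) a b :
  continuous g (a - b) -> continuous psi b ->
  continuous (fun b => scalC (g (a - b)) (psi b)) b.
Proof.
  intros Hg Hp; apply (continuous_scal (K := R_AbsRing) (V := C_R_NormedModule)); [|exact Hp].
  apply (continuous_comp (fun b => a - b) g); [|exact Hg].
  apply (continuous_minus (V := R_NormedModule)); [apply continuous_const | apply continuous_id].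
Qed.

Definition conv_window (psi : R -> C) (g : R -> R) (c d a : R) : C :=
  @RInt C_R_CompleteNormedModule (fun b => scalC (g (a - b)) (psi b)) c d.

Lemma conv_delta_window (psi : R -> C) (g : R -> R) delta c d a :
  0 <= delta -> (forall x, continuous g x) -> (forall x, (x < 0 \/ delta < x) -> g x = 0) ->
  (forall b, c <= b <= d -> continuous psi b) -> c <= a - delta -> a <= d ->
  conv_delta psi g delta a = conv_window psi g c d a.
Proof.
  intros Hd Hg Hz Hp Hc Hda.
  assert (Hzero : forall u v, u <= v -> (forall b, u < b < v -> g (a - b) = 0) ->
    @is_RInt C_R_NormedModule (fun b => scalC (g (a - b)) (psi b)) u v zero).
  { intros u v Huv Hvanish.
    apply (is_RInt_ext (fun _ => zero)); [rewrite Rmin_left, Rmax_right by lra|].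
    - intros b Hb; rewrite Hvanish by exact Hb; symmetry.
      apply (scal_zero_l (K := R_Ring) (V := C_R_ModuleSpace)).
    - assert (Hconst := is_RInt_const (V := C_R_NormedModule) u v zero).
      rewrite (scal_zero_r (K := R_AbsRing) (V := C_R_NormedModule)) in Hconst; exact Hconst. }
  assert (Hleft : forall b, c < b < a - delta -> g (a - b) = 0) by (intros; apply Hz; right; lra).
  assert (Hright : forall b, a < b < d -> g (a - b) = 0) by (intros; apply Hz; left; lra).
  assert (Hwhole := is_RInt_Chasles _ c (a - delta) d _ _ (Hzero _ _ Hc Hleft)
    (is_RInt_Chasles _ (a - delta) a d _ _
      (is_RInt_conv_delta_reflect psi g delta a Hd Hg (fun b Hb => Hp b ltac:(lra)))
      (Hzero _ _ Hda Hright))).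
  rewrite plus_zero_l, plus_zero_r in Hwhole.
  symmetry; exact (is_RInt_unique (V := C_R_CompleteNormedModule) _ _ _ _ Hwhole).
Qed.

Lemma is_derive_conv_window (psi : R -> C) (g g' g'' : R -> R) M2 c d a :
  (forall x, is_derive g x (g' x)) -> (forall x, is_derive g' x (g'' x)) ->
  (forall x, Rabs (g'' x) <= M2) -> c <= d -> (forall b, c <= b <= d -> continuous psi b) ->
  is_derive (K := R_AbsRing) (V := C_R_NormedModule)
    (conv_window psi g c d) a (conv_window psi g' c d a).
Proof.
  intros H1 H2 HM Hcd Hp.
  destruct (continuous_bounded_segment psi c d Hcd Hp) as [Mp HMp].
  assert (Hint : forall h x, (forall y, continuous h y) ->
    @is_RInt C_R_NormedModule (fun b => scalC (h (x - b)) (psi b)) c d (conv_window psi h c d x)).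
  { intros h x Hh; apply (RInt_correct (V := C_R_CompleteNormedModule)), ex_RInt_continuous.
    rewrite Rmin_left, Rmax_right by lra; intros b Hb.
    apply continuous_window_integrand; [apply Hh | apply Hp, Hb]. }
  assert (Hg := continuous_of_is_derive g g' H1); assert (Hg' := continuous_of_is_derive g' g'' H2).
  apply (is_derive_of_quadratic_remainder _ _ _ ((d - c) * (M2 * Mp))); intros y.
  assert (Hrem := is_RInt_minus _ _ _ _ _ _ (is_RInt_minus _ _ _ _ _ _ (Hint g y Hg) (Hint g a Hg))
                    (is_RInt_scal _ _ _ (y - a) _ (Hint g' a Hg'))).
  set (r := fun b => g (y - b) - g (a - b) - (y - a) * g' (a - b)).
  assert (Hr : @is_RInt C_R_NormedModule (fun b => scalC (r b) (psi b)) c d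
    (minus (minus (conv_window psi g c d y) (conv_window psi g c d a))
           (scal (y - a) (conv_window psi g' c d a)))).
  { eapply is_RInt_ext, Hrem; intros b _; unfold r; destruct (psi b); compute; f_equal; ring. }
  apply Rle_trans with ((d - c) * (M2 * (y - a) ^ 2 * Mp)).
  - apply (norm_RInt_le_const (fun b => scalC (r b) (psi b)) c d _ _ Hcd); [|exact Hr].
    intros b Hb; eapply Rle_trans; [apply (norm_scal (K := R_AbsRing) (V := C_R_NormedModule))|].
    apply Rmult_le_compat; [apply Rabs_pos | apply norm_ge_0 | | apply HMp, Hb].
    assert (Htay := taylor_remainder_le g g' g'' M2 H1 H2 HM (a - b) (y - b)).
    replace (y - b - (a - b)) with (y - a) in Htay by ring; exact Htay.
  - apply Req_le; ring.
Qed.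

Lemma is_derive_conv_delta lo hi (psi : R -> C) (g g' g'' : R -> R) M2 delta a :
  0 <= delta -> (forall x, is_derive g x (g' x)) -> (forall x, is_derive g' x (g'' x)) ->
  (forall x, Rabs (g'' x) <= M2) -> (forall x, (x < 0 \/ delta < x) -> g x = 0) ->
  (forall y, in_interval lo hi y -> continuous psi y) ->
  in_interval lo hi a -> in_interval lo hi (a - delta) ->
  is_derive (K := R_AbsRing) (V := C_R_NormedModule)
    (conv_delta psi g delta) a (conv_delta psi g' delta a).
Proof.
  intros Hd H1 H2 HM Hz Hp Ha Had.
  destruct (in_interval_open _ _ _ Ha) as [r1 [Hr1 Hball1]].
  destruct (in_interval_open _ _ _ Had) as [r2 [Hr2 Hball2]].
  set (r := Rmin r1 r2 / 2).
  assert (Hr : 0 < r) by (apply Rdiv_lt_0_compat; [apply Rmin_pos|]; lra).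
  assert (Hrr : r < r1 /\ r < r2)
    by (pose proof (Rmin_l r1 r2); pose proof (Rmin_r r1 r2); unfold r; lra).
  set (c := a - delta - r); set (d := a + r).
  assert (Hpsi : forall b, c <= b <= d -> continuous psi b).
  { intros b Hb; apply Hp, (in_interval_between _ _ c d); auto.
    - apply Hball2; unfold c; rewrite Rabs_left; lra.
    - apply Hball1; unfold d; rewrite Rabs_right; lra. }
  assert (Hz' := is_derive_vanish_outside g g' 0 delta H1 Hz).
  assert (Hg := continuous_of_is_derive g g' H1); assert (Hg' := continuous_of_is_derive g' g'' H2).
  assert (Hloc : locally a (fun t => conv_window psi g c d t = conv_delta psi g delta t)).
  { exists (mkposreal _ Hr); intros t Ht; change (Rabs (t - a) < r) in Ht; apply Rabs_def2 in Ht.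
    symmetry; apply conv_delta_window; auto; unfold c, d; lra. }
  rewrite (conv_delta_window psi g' delta c d a); auto; [|unfold c, d; lra..].
  apply (is_derive_ext_loc _ _ a _ Hloc).
  apply (is_derive_conv_window psi g g' g'' M2); auto; unfold c, d; lra.
Qed.

(** * Compactness of the swept set *)

Lemma finite_pos_lower_bound {T : Type} (f : T -> R) (l : list T) :
  (forall t, 0 < f t) -> exists m, 0 < m /\ forall t, In t l -> m <= f t.
Proof.
  intros Hf; induction l as [|t0 l [m [Hm Hl]]].
  - exists 1; split; [lra | intros t []].
  - exists (Rmin m (f t0)); split; [apply Rmin_pos; auto|].
    intros t [<-|Ht]; [apply Rmin_r | eapply Rle_trans; [apply Rmin_l | auto]].
Qed.

Lemma segment_gauge_cover (delta : R) (rad : R -> posreal) :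
  exists l : list R, forall x, 0 <= x <= delta ->
    exists t, In t l /\ 0 <= t <= delta /\ Rabs (x - t) < rad t.
Proof.
  apply NNPP; intros Hno.
  apply (compactness_list 1 (0, tt) (delta, tt) (fun t => rad (fst t))); intros [l Hl].
  apply Hno; exists (map fst l); intros x Hx.
  destruct (Hl (x, tt)) as [[t []] [Hin [[Ht _] [Hxt _]]]]; [split; [exact Hx | exact I]|].
  exists t; split; [apply (in_map fst _ (t, tt) Hin) | split; assumption].
Qed.

Lemma tube_cover (I : Type) (U : I -> R * R -> Prop) (p : R * R) (delta : R) :
  (forall i, open (U i)) -> (forall al, 0 <= al <= delta -> exists i, U i (fst p, snd p - al)) ->
  exists r, 0 < r /\ exists L : list I, forall q al,
    Rabs (fst q - fst p) < r -> Rabs (snd q - snd p) < r -> 0 <= al <= delta ->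
    exists i, In i L /\ U i (fst q, snd q - al).
Proof.
  intros Hopen Hcov.
  destruct (Rlt_or_le delta 0) as [Hneg|Hpos].
  { exists 1; split; [lra|]; exists nil; intros; lra. }
  destruct (Hcov 0 ltac:(lra)) as [i0 _].
  assert (Hball : forall al, exists ie : I * posreal, 0 <= al <= delta -> forall z,
    Rabs (fst z - fst p) < snd ie -> Rabs (snd z - (snd p - al)) < snd ie -> U (fst ie) z).
  { intros al; destruct (classic (0 <= al <= delta)) as [Hal|Hal].
    - destruct (Hcov al Hal) as [i Hi]; destruct (Hopen i _ Hi) as [e He].
      exists (i, e); intros _ z Hz1 Hz2; apply He; split; assumption.
    - (* a junk value: [i0] only witnesses that [I] is inhabited *)
      exists (i0, mkposreal 1 Rlt_0_1); intros; contradiction. }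
  destruct (choice _ Hball) as [ch Hch].
  assert (Hhalf : forall al, 0 < snd (ch al) / 2)
    by (intros; pose proof (cond_pos (snd (ch al))); lra).
  destruct (segment_gauge_cover delta (fun al => mkposreal _ (Hhalf al))) as [l Hl].
  destruct (finite_pos_lower_bound (fun al => snd (ch al) / 2) l Hhalf) as [r [Hr Hrl]].
  exists r; split; [exact Hr|]; exists (map (fun al => fst (ch al)) l).
  intros q al Hq1 Hq2 Hal.
  destruct (Hl al Hal) as [t [Hin [Ht Hat]]]; simpl in Hat.
  specialize (Hrl t Hin); pose proof (cond_pos (snd (ch t))).
  exists (fst (ch t)); split; [apply (in_map (fun al => fst (ch al)) _ _ Hin)|].
  apply (Hch t Ht); simpl; [lra|].
  replace (snd q - al - (snd p - t)) with ((snd q - snd p) + (t - al)) by ring.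
  eapply Rle_lt_trans; [apply Rabs_triang|].
  rewrite (Rabs_minus_sym t al); lra.
Qed.

Definition shift_set (K : R * R -> Prop) (delta : R) (z : R * R) : Prop :=
  exists q al, K q /\ 0 <= al <= delta /\ z = (fst q, snd q - al).

Lemma open_box (p : R * R) (r : R) :
  open (fun q : R * R => Rabs (fst q - fst p) < r /\ Rabs (snd q - snd p) < r).
Proof.
  intros [q1 q2] [B1 B2]; simpl in B1, B2.
  set (e := Rmin (r - Rabs (q1 - fst p)) (r - Rabs (q2 - snd p))).
  assert (He : 0 < e) by (apply Rmin_pos; lra).
  assert (He1 : e <= r - Rabs (q1 - fst p)) by apply Rmin_l.
  assert (He2 : e <= r - Rabs (q2 - snd p)) by apply Rmin_r.
  exists (mkposreal _ He); intros [y1 y2] [Hy1 Hy2].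
  change (Rabs (y1 - q1) < e) in Hy1; change (Rabs (y2 - q2) < e) in Hy2; simpl.
  replace (y1 - fst p) with ((y1 - q1) + (q1 - fst p)) by ring.
  replace (y2 - snd p) with ((y2 - q2) + (q2 - snd p)) by ring.
  split; (eapply Rle_lt_trans; [apply Rabs_triang | lra]).
Qed.

Lemma compact_shift_set (K : R * R -> Prop) delta : compact_RR K -> compact_RR (shift_set K delta).
Proof.
  intros HK I U Hopen Hcov.
  assert (Htube : forall p, exists rL : R * list I, K p -> 0 < fst rL /\ forall q al,
    Rabs (fst q - fst p) < fst rL -> Rabs (snd q - snd p) < fst rL -> 0 <= al <= delta ->
    exists i, In i (snd rL) /\ U i (fst q, snd q - al)).
  { intros p; destruct (classic (K p)) as [Kp|Kp].
    - destruct (tube_cover I U p delta Hopen) as [r [Hr [L HL]]].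
      + intros al Hal; apply Hcov; exists p, al; auto.
      + exists (r, L); auto.
    - exists (1, nil); intros; contradiction. }
  destruct (choice _ Htube) as [rL HrL].
  destruct (HK (R * R)%type (fun p q =>
    K p /\ Rabs (fst q - fst p) < fst (rL p) /\ Rabs (snd q - snd p) < fst (rL p))) as [l Hl].
  - intros p q [Kp Hq].
    destruct (open_box p (fst (rL p)) q Hq) as [e He]; exists e; intros y Hy; split; auto.
  - intros p Kp; exists p; split; [exact Kp|].
    rewrite !Rminus_diag, Rabs_R0; split; apply (HrL p Kp).
  - exists (flat_map (fun p => snd (rL p)) l).
    intros z [q [al [Kq [Hal ->]]]].
    destruct (Hl q Kq) as [p [Hin [Kp [B1 B2]]]].
    destruct (proj2 (HrL p Kp) q al B1 B2 Hal) as [i [Hi HU]].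
    exists i; split; [apply in_flat_map; exists p; auto | exact HU].
Qed.

Lemma AA_shift_set lo hi delta K :
  (forall p, K p -> AA (fun a => in_interval lo hi a /\ in_interval lo hi (a - delta)) p) ->
  forall z, shift_set K delta z -> AA (in_interval lo hi) z.
Proof.
  intros HK z [q [al [Kq [Hal ->]]]]; destruct (HK q Kq) as [H1 [[H2 H2'] [H3 H3']]]; simpl in *.
  split; [|split]; simpl.
  - intros t Ht; destruct (H1 t Ht) as [Ha Hb].
    apply (in_interval_between _ _ (snd q + t - delta) (snd q + t)); auto; lra.
  - apply (in_interval_between _ _ (snd q - delta) (snd q)); auto; lra.
  - apply (in_interval_between _ _ (fst q + snd q - delta) (fst q + snd q)); auto; lra.
Qed.

(** * Supershift property of the convolution *)

Lemma h_eps_range (eps : nat -> R) N nu : (1 <= N)%nat -> (nu <= N)%nat -> 0 <= eps N < 1 ->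
  -1 <= h_eps eps N nu <= 1.
Proof.
  intros HN Hnu He; unfold h_eps.
  assert (Hn : 0 < INR N) by (apply lt_0_INR; lia).
  assert (Hv : 0 <= INR nu <= INR N) by (split; [apply pos_INR | apply le_INR; lia]).
  assert (Hs : 0 <= (INR nu + eps N * (INR N - INR nu)) / INR N <= 1).
  { split; [apply Rdiv_le_0_compat; nra|].
    apply (Rmult_le_reg_r (INR N)); [exact Hn|].
    unfold Rdiv; rewrite Rmult_assoc, Rinv_l by lra; nra. }
  lra.
Qed.

Lemma is_RInt_weighted_sum_n (f : nat -> R -> C) (I : nat -> C) (w : nat -> R) a b n :
  (forall nu, (nu <= n)%nat -> @is_RInt C_R_NormedModule (f nu) a b (I nu)) ->
  @is_RInt C_R_NormedModule
    (fun t => @sum_n C_AbelianMonoid (fun nu => Cmult (RtoC (w nu)) (f nu t)) n) a b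
    (@sum_n C_AbelianMonoid (fun nu => Cmult (RtoC (w nu)) (I nu)) n).
Proof.
  induction n as [|n IH]; intros Hf.
  - rewrite sum_O, Cmult_RtoC_scal.
    apply (is_RInt_ext (fun t => scalC (w 0%nat) (f 0%nat t))).
    + intros t _; rewrite sum_O; symmetry; apply Cmult_RtoC_scal.
    + apply (is_RInt_scal (V := C_R_NormedModule)), Hf; lia.
  - rewrite sum_Sn, Cmult_RtoC_scal.
    apply (is_RInt_ext (fun t => plus (sum_n (fun nu => Cmult (RtoC (w nu)) (f nu t)) n)
                                      (scalC (w (S n)) (f (S n) t)))).
    + intros t _; rewrite sum_Sn, Cmult_RtoC_scal; reflexivity.
    + apply (is_RInt_plus (V := C_R_NormedModule)); [apply IH; intros; apply Hf; lia|].
      apply (is_RInt_scal (V := C_R_NormedModule)), Hf; lia.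
Qed.

Lemma is_RInt_S_eps_conv_delta (eps : nat -> R) (psi : R -> C) (theta : R -> R) delta N a a' :
  0 <= delta -> (forall x, continuous theta x) ->
  (forall nu, (nu <= N)%nat -> forall b,
     a' + h_eps eps N nu - delta <= b <= a' + h_eps eps N nu -> continuous psi b) ->
  @is_RInt C_R_NormedModule (fun al => scalC (theta al) (S_eps eps psi N a (a' - al))) 0 delta
    (S_eps eps (conv_delta psi theta delta) N a a').
Proof.
  intros Hd Ht Hp.
  eapply is_RInt_ext; [|apply (is_RInt_weighted_sum_n
    (fun nu al => scalC (theta al) (psi (a' + h_eps eps N nu - al))))].
  - intros al _; unfold S_eps.
    transitivity (@sum_n C_AbelianMonoid (fun nu => scalC (theta al)
      (Cmult (RtoC (Binomial.C N nu * ((1 + a) / 2) ^ (N - nu) * ((1 - a) / 2) ^ nu))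
             (psi (a' - al + h_eps eps N nu)))) N).
    + f_equal; apply functional_extensionality; intros nu.
      rewrite scalC_Cmult_RtoC; do 3 f_equal; ring.
    + exact (sum_n_scal_l (V := C_R_ModuleSpace) _ _ _).
  - intros nu Hnu; apply is_RInt_conv_delta; auto; apply Hp, Hnu.
Qed.

Lemma Cmod_S_eps_conv_delta_sub_le (eps : nat -> R) (psi : R -> C) theta delta Mt eta N a a' :
  0 <= delta -> (forall y, continuous theta y) -> (forall y, Rabs (theta y) <= Mt) ->
  (forall nu, (nu <= N)%nat -> forall b,
     a' + h_eps eps N nu - delta <= b <= a' + h_eps eps N nu -> continuous psi b) ->
  (forall b, a + a' - delta <= b <= a + a' -> continuous psi b) ->
  (forall al, 0 <= al <= delta ->
     Cmod (Cminus (S_eps eps psi N a (a' - al)) (psi (a + a' - al))) <= eta) ->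
  Cmod (Cminus (S_eps eps (conv_delta psi theta delta) N a a')
               (conv_delta psi theta delta (a + a'))) <= delta * (Mt * eta).
Proof.
  intros Hd Ht HMt Hpsi Hpsi' Heta.
  assert (Hdiff := is_RInt_minus _ _ _ _ _ _
    (is_RInt_S_eps_conv_delta eps psi theta delta N a a' Hd Ht Hpsi)
    (is_RInt_conv_delta psi theta delta (a + a') Hd Ht Hpsi')).
  rewrite Cmod_norm; replace (delta * (Mt * eta)) with ((delta - 0) * (Mt * eta)) by ring.
  apply (norm_RInt_le_const
    (fun al => scalC (theta al) (minus (S_eps eps psi N a (a' - al)) (psi (a + a' - al)))) 0 delta);
    [lra | |].
  - intros al Hal; eapply Rle_trans; [apply (norm_scal (K := R_AbsRing) (V := C_R_NormedModule))|].
    apply Rmult_le_compat; [apply Rabs_pos | apply norm_ge_0 | apply HMt |].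
    rewrite <- Cmod_norm; apply Heta, Hal.
  - eapply is_RInt_ext, Hdiff; intros al _.
    exact (eq_sym (scal_minus_distr_l (V := C_R_ModuleSpace) _ _ _)).
Qed.

(* Condition (2) of [regular_supershift]. *)
Definition supershift_uniform (A : R -> Prop) (psi : R -> C) : Prop :=
  forall (I' : Type) (epsf : I' -> nat -> R),
    (forall i, adm_seq (epsf i)) ->
    (forall eta, 0 < eta -> exists N1 : nat, forall N, (N1 <= N)%nat ->
        forall i, epsf i N <= eta) ->
    forall K, compact_RR K -> (forall p, K p -> AA A p) ->
    forall e, 0 < e -> exists N0 : nat, forall N, (N0 <= N)%nat ->
      forall i p, K p ->
        Cmod (Cminus (S_eps (epsf i) psi N (fst p) (snd p)) (psi (fst p + snd p))) < e.

Lemma conv_delta_supershift_uniform lo hi (psi : R -> C) theta delta Mt :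
  0 <= delta -> (forall y, continuous theta y) -> (forall y, Rabs (theta y) <= Mt) ->
  (forall y, in_interval lo hi y -> continuous psi y) ->
  supershift_uniform (in_interval lo hi) psi ->
  supershift_uniform (fun a => in_interval lo hi a /\ in_interval lo hi (a - delta))
    (conv_delta psi theta delta).
Proof.
  intros Hd Htc HMt Hpc Hunif I' epsf Hadm Hsup K HK HKA e He.
  assert (HMt0 : 0 <= Mt) by (apply Rle_trans with (Rabs (theta 0)); [apply Rabs_pos | apply HMt]).
  set (e' := e / (delta * Mt + 1)).
  assert (He' : 0 < e') by (apply Rdiv_lt_0_compat; nra).
  assert (Hsmall : delta * (Mt * e') < e).
  { unfold e'; apply (Rmult_lt_reg_r (delta * Mt + 1)); [nra|].
    replace (delta * (Mt * (e / (delta * Mt + 1))) * (delta * Mt + 1)) with (delta * Mt * e)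
      by (field; nra); nra. }
  destruct (Hunif I' epsf Hadm Hsup (shift_set K delta) (compact_shift_set K delta HK)
    (AA_shift_set lo hi delta K HKA) e' He') as [N0 HN0].
  exists (Nat.max N0 1); intros N HN i [a a'] Kp; simpl.
  assert (Hep : 0 <= epsf i N < 1) by (apply (proj1 (Hadm i)); lia).
  destruct (HKA _ Kp) as [HA1 [_ [HA3 HA3']]]; simpl in HA1, HA3, HA3'.
  assert (Hpsi : forall x, in_interval lo hi x -> in_interval lo hi (x - delta) ->
                   forall b, x - delta <= b <= x -> continuous psi b).
  { intros x Hx Hxd b Hb; apply Hpc, (in_interval_between _ _ (x - delta) x); auto. }
  eapply Rle_lt_trans; [|exact Hsmall].
  apply Cmod_S_eps_conv_delta_sub_le; auto.
  - intros nu Hnu; destruct (HA1 _ (h_eps_range _ N nu ltac:(lia) Hnu Hep)); apply Hpsi; auto.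
  - apply Hpsi; assumption.
  - intros al Hal.
    assert (Kal : shift_set K delta (a, a' - al)) by (exists (a, a'), al; repeat split; auto; lra).
    specialize (HN0 N ltac:(lia) i _ Kal); simpl in HN0.
    replace (a + (a' - al)) with (a + a' - al) in HN0 by ring; lra.
Qed.

Lemma supershift_uniform_single (A : R -> Prop) (psi : R -> C) :
  supershift_uniform A psi ->
  forall eps, adm_seq eps ->
    forall K, compact_RR K -> (forall p, K p -> AA A p) ->
    forall e, 0 < e -> exists N0 : nat, forall N, (N0 <= N)%nat ->
      forall p, K p -> Cmod (Cminus (S_eps eps psi N (fst p) (snd p)) (psi (fst p + snd p))) < e.
Proof.
  intros Hunif eps Hadm K HK HKA e He.
  destruct (Hunif unit (fun _ => eps) (fun _ => Hadm)) with (K := K) (e := e) as [N0 HN0]; auto.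
  - intros eta Heta; destruct Hadm as [_ Hlim]; apply is_lim_seq_spec in Hlim.
    destruct (Hlim (mkposreal _ Heta)) as [N1 HN1]; exists N1; intros N HN _.
    specialize (HN1 N HN); simpl in HN1; rewrite Rminus_0_r in HN1; apply Rabs_def2 in HN1; lra.
  - exists N0; intros N HN p Kp; exact (HN0 N HN tt p Kp).
Qed.

Theorem mainTheorem4 (lo hi : Rbar) (psi : R -> C) (delta : R) (theta : R -> R) :
  Rbar_lt 2 (Rbar_minus hi lo) ->
  regular_supershift (in_interval lo hi) psi ->
  0 < delta -> Rbar_lt delta (Rbar_minus (Rbar_minus hi lo) 2) ->
  smooth_R_on (fun _ => True) theta ->
  (forall x, theta x <> 0 -> 0 <= x <= delta) ->
  let A_delta := fun a => in_interval lo hi a /\ in_interval lo hi (a - delta) in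
  smooth_C_on A_delta (conv_delta psi theta delta) /\
  regular_supershift A_delta (conv_delta psi theta delta).
Proof.
  intros _ [Hpsi [_ Hunif]] Hd _ [F [HF0 HF]] Hsupp A_delta.
  assert (HFd : forall n x, is_derive (F n) x (F (S n) x)) by (intros; apply HF; exact I).
  assert (Hz : forall n x, (x < 0 \/ delta < x) -> F n x = 0).
  { apply (derivs_vanish_outside F 0 delta HFd); intros x Hx; rewrite HF0.
    destruct (Req_dec (theta x) 0) as [|Hne]; [easy | apply Hsupp in Hne; lra]. }
  assert (Hbd : forall n, exists M, forall x, Rabs (F n x) <= M).
  { intros n; apply (bounded_of_vanish_outside (F n) 0 delta); [lra | |apply Hz].
    exact (continuous_of_is_derive _ _ (HFd n)). }
  replace theta with (F O) by (apply functional_extensionality; exact HF0).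
  assert (Hder : forall n a, A_delta a ->
    is_derive (K := R_AbsRing) (V := C_R_NormedModule)
      (conv_delta psi (F n) delta) a (conv_delta psi (F (S n)) delta a)).
  { intros n a [Ha Had]; destruct (Hbd (S (S n))) as [M2 HM2].
    apply (is_derive_conv_delta lo hi psi (F n) (F (S n)) (F (S (S n))) M2); auto; lra. }
  split; [exists (fun n => conv_delta psi (F n) delta); split; [reflexivity | exact Hder]|].
  destruct (Hbd O) as [Mt HMt].
  assert (HU := conv_delta_supershift_uniform lo hi psi (F O) delta Mt ltac:(lra)
                  (continuous_of_is_derive _ _ (HFd O)) HMt Hpsi Hunif).
  split; [|split; [apply supershift_uniform_single, HU | exact HU]].
  intros a Ha; apply (ex_derive_continuous (K := R_AbsRing) (V := C_R_NormedModule)).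
  eexists; apply (Hder O a Ha).
Qed.
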